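(* Let $Y$ be a solid vector space and $(X,d)$ a cone metric space over $Y$. Then convergence in $X$ has the following properties: (i) any convergent sequence has a unique limit; (ii) any subsequence of a convergent sequence converges to the same limit; (iii) any convergent sequence is bounded, i.e. its set of terms is contained in some closed ball; (iv) the convergence and the limit of a sequence do not depend on finitely many of its terms.
   Context: Vector space with convergence: a real vector space $Y$ with a relation $\to$ between sequences in $Y$ and points of $Y$ (uniqueness of limits not assumed) such that (C1) $x_n\to x$, $y_n\to y$ imply $x_n+y_n\to x+y$; (C2) $x_n\to x$, $\lambda\in\mathbb R$ imply $\lambda x_n\to\lambda x$; (C3) $\lambda_n\to\lambda$ in $\mathbb R$ imply $\lambda_n x\to\lambda x$. $A\subseteq Y$ is open if $x_n\to x\in A$ implies $x_n\in A$ for all but finitely many $n$; closed if $x_n\to x$, $x_n\in A$ $\forall n$ imply $x\in A$; $A^\circ$ is the union of all open subsets of $A$. A cone is a nonempty closed $K$ with $\lambda K\subseteq K$ ($\lambda\ge0$), $K+K\subseteq K$, $K\cap(-K)=\{0\}$; solid if $K\ne\{0\}$, $K^\circ\ne\emptyset$. A vector ordering is a partial order $\preceq$ with (V1) $x\preceq y\Rightarrow x+z\preceq y+z$; (V2) $\lambda\ge0$, $x\preceq y\Rightarrow\lambda x\preceq\lambda y$; (V3) $x_n\to x$, $y_n\to y$, $x_n\preceq y_n$ $\forall n\Rightarrow x\preceq y$. Solid vector space: positive cone $K=\{x:x\succeq0\}$ solid, with $x\prec y$ iff $y-x\in K^\circ$. Cone metric space over $Y$: nonempty $X$ with $d\colon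 X\times X\to Y$, $d(x,y)\succeq0$, $d(x,y)=0$ iff $x=y$, $d(x,y)=d(y,x)$, $d(x,y)\preceq d(x,z)+d(z,y)$. Convergence in $X$ is with respect to the topology with basis the open balls $U(x,r)=\{y:d(y,x)\prec r\}$ ($r\succ0$): $x_n\to x$ iff for every $c\succ0$, $d(x_n,x)\prec c$ for all but finitely many $n$. Closed ball $\overline U(x,r)=\{y:d(y,x)\preceq r\}$, $r\succeq0$. *)

From HB Require Import structures.
From mathcomp Require Import all_boot all_order all_algebra.
From mathcomp Require Import reals.
Set Implicit Arguments. Unset Strict Implicit. Unset Printing Implicit Defensive.
Import Order.TTheory GRing.Theory Num.Theory.
Local Open Scope ring_scope.

Definition real_cvg (R : realType) (lam : nat -> R) (l : R) : Prop :=
  forall e : R, 0 < e -> exists N : nat, forall n : nat, (N <= n)%N -> `|lam n - l| < e.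

Definition is_open (R : realType) (Y : lmodType R)
  (cv : (nat -> Y) -> Y -> Prop) (A : Y -> Prop) : Prop :=
  forall (xs : nat -> Y) (x : Y), cv xs x -> A x ->
    exists N : nat, forall n : nat, (N <= n)%N -> A (xs n).

Definition is_closed (R : realType) (Y : lmodType R)
  (cv : (nat -> Y) -> Y -> Prop) (A : Y -> Prop) : Prop :=
  forall (xs : nat -> Y) (x : Y), cv xs x -> (forall n, A (xs n)) -> A x.

Definition interior (R : realType) (Y : lmodType R)
  (cv : (nat -> Y) -> Y -> Prop) (A : Y -> Prop) (x : Y) : Prop :=
  exists U : Y -> Prop, is_open cv U /\ (forall y, U y -> A y) /\ U x.

Definition is_cone (R : realType) (Y : lmodType R)
  (cv : (nat -> Y) -> Y -> Prop) (K : Y -> Prop) : Prop :=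
  (exists x, K x) /\ is_closed cv K /\
  (forall (l : R) (x : Y), 0 <= l -> K x -> K (l *: x)) /\
  (forall x y, K x -> K y -> K (x + y)) /\
  (forall x, K x -> K (- x) -> x = 0).

Definition solid_cone (R : realType) (Y : lmodType R)
  (cv : (nat -> Y) -> Y -> Prop) (K : Y -> Prop) : Prop :=
  is_cone cv K /\ (exists x, K x /\ x <> 0) /\ (exists x, interior cv K x).

Record solid_vector_space (R : realType) (Y : lmodType R) := SolidVS {
  conv : (nat -> Y) -> Y -> Prop;
  conv_add : forall xs ys x y, conv xs x -> conv ys y ->
      conv (fun n => xs n + ys n) (x + y);
  conv_scale : forall xs x (l : R), conv xs x -> conv (fun n => l *: xs n) (l *: x);
  conv_real : forall (lam : nat -> R) (l : R) (x : Y), real_cvg lam l ->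
      conv (fun n => lam n *: x) (l *: x);
  vle : Y -> Y -> Prop;
  vle_refl : forall x, vle x x;
  vle_anti : forall x y, vle x y -> vle y x -> x = y;
  vle_trans : forall x y z, vle x y -> vle y z -> vle x z;
  vle_add : forall x y z, vle x y -> vle (x + z) (y + z);
  vle_scale : forall (l : R) x y, 0 <= l -> vle x y -> vle (l *: x) (l *: y);
  vle_closed : forall xs ys x y, conv xs x -> conv ys y ->
      (forall n, vle (xs n) (ys n)) -> vle x y;
  pos_cone_solid : solid_cone conv (fun x => vle 0 x)
}.

Definition vlt (R : realType) (Y : lmodType R) (S : solid_vector_space Y)
  (x y : Y) : Prop := interior (conv S) (fun z => vle S 0 z) (y - x).

Record cone_metric (R : realType) (Y : lmodType R) (S : solid_vector_space Y)
  (X : Type) := ConeMetric {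
  dist : X -> X -> Y;
  X_inhabited : inhabited X;
  dist_ge0 : forall x y, vle S 0 (dist x y);
  dist_eq0 : forall x y, dist x y = 0 <-> x = y;
  dist_sym : forall x y, dist x y = dist y x;
  dist_tri : forall x y z, vle S (dist x y) (dist x z + dist z y)
}.

Definition cm_conv (R : realType) (Y : lmodType R) (S : solid_vector_space Y)
  (X : Type) (d : cone_metric S X) (xs : nat -> X) (x : X) : Prop :=
  forall c : Y, vlt S 0 c ->
    exists N : nat, forall n : nat, (N <= n)%N -> vlt S (dist d (xs n) x) c.

From HB Require Import structures.
From mathcomp Require Import all_boot all_order all_algebra.
From mathcomp Require Import reals.
From mathcomp Require Import zify.
Set Implicit Arguments. Unset Strict Implicit. Unset Printing Implicit Defensive.
Import Order.TTheory GRing.Theory Num.Theory.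
Local Open Scope ring_scope.

(* Uniqueness: if [xs] tends to [x] and [y], the triangle inequality gives
   [d(x,y) <= c] for every [c] in the interior of the positive cone; taking
   [c = c0 / n.+1] for a fixed interior point [c0] and passing to the limit with
   (V3) yields [d(x,y) <= 0].  Boundedness: beyond some index the terms are
   within [c0] of the limit, and the finitely many earlier distances are
   absorbed by adding them to [c0]. *)

Lemma real_cvg_cst (R : realType) (l : R) : real_cvg (fun _ => l) l.
Proof. by move=> e e0; exists 0%N => n _; rewrite subrr normr0. Qed.

Lemma real_cvg_inv_succ (R : realType) : real_cvg (fun m : nat => (m.+1%:R : R)^-1) 0.
Proof.
move=> e e0; have ei0 : 0 <= e^-1 by rewrite invr_ge0 ltW.
exists (Num.Def.archi_bound e^-1) => n Hn.
rewrite subr0 ger0_norm ?invr_ge0 ?ler0n // invf_plt ?posrE ?ltr0Sn //.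
apply: (lt_le_trans (archi_boundP ei0)).
by rewrite ler_nat; exact: leq_trans Hn (leqnSn n).
Qed.

Section SolidVectorSpace.
Variables (R : realType) (Y : lmodType R) (S : solid_vector_space Y).

Local Notation K := (fun z => vle S 0 z).
Local Notation intK := (interior (conv S) K).

Lemma interior_ge0 (x : Y) : intK x -> vle S 0 x.
Proof. by case=> U [_ [sUK Ux]]; apply: sUK. Qed.

Lemma vlt0E (c : Y) : vlt S 0 c = intK c.
Proof. by rewrite /vlt subr0. Qed.

Lemma vltW (a b : Y) : vlt S a b -> vle S a b.
Proof. by move=> /interior_ge0 /(vle_add a); rewrite add0r subrK. Qed.

Lemma vle_addr (a b : Y) : vle S 0 b -> vle S a (a + b).
Proof. by move=> /(vle_add a); rewrite add0r addrC. Qed.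

Lemma interior_scale (l : R) (c : Y) : 0 < l -> intK c -> intK (l *: c).
Proof.
move=> l0 [U [oU [sUK Uc]]]; have ln0 : l != 0 by rewrite gt_eqF.
exists (fun y => U (l^-1 *: y)); split; [|split].
- by move=> xs x cx Ux; exact: oU _ _ (conv_scale l^-1 cx) Ux.
- by move=> y /sUK /(vle_scale (ltW l0)); rewrite scaler0 scalerA mulfV // scale1r.
- by rewrite scalerA mulVf // scale1r.
Qed.

Lemma interior_half (c : Y) : intK c -> intK (2^-1 *: c).
Proof. by apply: interior_scale; rewrite invr_gt0. Qed.

Lemma le_interior_le0 (a : Y) : (forall c, intK c -> vle S a c) -> vle S a 0.
Proof.
move=> le_a; have [_ [_ [c0 Ic0]]] := pos_cone_solid S.
have := vle_closed (conv_real S a (@real_cvg_cst R 1))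
                    (conv_real S c0 (@real_cvg_inv_succ R)).
rewrite scale1r scale0r; apply=> m; apply: le_a.
have m_pos : 0 < (m.+1%:R : R)^-1 by rewrite invr_gt0 ltr0Sn.
exact: interior_scale m_pos Ic0.
Qed.

Lemma bounded_prefix (f : nat -> Y) (c : Y) (M : nat) :
  (forall n, vle S 0 (f n)) -> vle S 0 c ->
  exists r, vle S c r /\ forall n, (n < M)%N -> vle S (f n) r.
Proof.
move=> f_ge0 c_ge0; elim: M => [|M [r [cr fr]]].
  by exists c; split=> //; exact: vle_refl.
have r_le := vle_addr r (f_ge0 M).
exists (r + f M); split; first exact: vle_trans cr r_le.
move=> n; rewrite ltnS leq_eqVlt => /orP [/eqP->|ltnM].
  by rewrite addrC; exact: vle_addr _ (vle_trans c_ge0 cr).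
exact: vle_trans (fr _ ltnM) r_le.
Qed.

Variables (X : Type) (d : cone_metric S X).

Lemma cm_conv_dist_le (xs : nat -> X) (x y : X) (c : Y) :
  cm_conv d xs x -> cm_conv d xs y -> intK c -> vle S (dist d x y) c.
Proof.
move=> cx cy Ic; have Ic2 : vlt S 0 (2^-1 *: c) by rewrite vlt0E; exact: interior_half.
have [N1 H1] := cx _ Ic2; have [N2 H2] := cy _ Ic2.
pose n := maxn N1 N2.
have dxn := vltW (H1 n (leq_maxl _ _)); have dyn := vltW (H2 n (leq_maxr _ _)).
have tri := dist_tri d x y (xs n); rewrite (dist_sym d x (xs n)) in tri.
have c_half : c = 2^-1 *: c + 2^-1 *: c by rewrite -scalerDl -[2^-1]mul1r -splitr scale1r.
rewrite c_half; apply: vle_trans tri _.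
apply: vle_trans (vle_add _ dxn) _; rewrite ![_ + dist _ _ _]addrC.
exact: vle_add _ dyn.
Qed.

Lemma cm_conv_unique (xs : nat -> X) (x y : X) :
  cm_conv d xs x -> cm_conv d xs y -> x = y.
Proof.
move=> cx cy; apply/(dist_eq0 d); apply: vle_anti (dist_ge0 d x y).
by apply: le_interior_le0 => c; exact: cm_conv_dist_le cx cy.
Qed.

Lemma cm_conv_subseq (xs : nat -> X) (x : X) (phi : nat -> nat) :
  (forall m n, (m < n)%N -> (phi m < phi n)%N) ->
  cm_conv d xs x -> cm_conv d (fun n => xs (phi n)) x.
Proof.
move=> phi_incr cx c Ic; have [N HN] := cx c Ic.
have phi_ge n : (n <= phi n)%N.
  by elim: n => // n IH; exact: leq_ltn_trans IH (phi_incr _ _ (ltnSn n)).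
by exists N => n Nn; apply: HN; exact: leq_trans Nn (phi_ge n).
Qed.

Lemma cm_conv_bounded (xs : nat -> X) (x : X) : cm_conv d xs x ->
  exists r, vle S 0 r /\ forall n, vle S (dist d (xs n) x) r.
Proof.
move=> cx; have [_ [_ [c0 Ic0]]] := pos_cone_solid S.
have [N HN] : exists N, forall n, (N <= n)%N -> vlt S (dist d (xs n) x) c0.
  by apply: cx; rewrite vlt0E.
have [r [c0r prefix]] :=
  bounded_prefix N (fun n => dist_ge0 d (xs n) x) (interior_ge0 Ic0).
exists r; split; first exact: vle_trans (interior_ge0 Ic0) c0r.
move=> n; case: (ltnP n N) => [/prefix //|Nn].
exact: vle_trans (vltW (HN n Nn)) c0r.
Qed.

Lemma cm_conv_shift (xs ys : nat -> X) (N k : nat) (x : X) :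
  (forall n, (N <= n)%N -> ys n = xs (n + k)%N) ->
  cm_conv d xs x <-> cm_conv d ys x.
Proof.
move=> ysE; split=> [cx | cy] c Ic.
- have [N0 HN0] := cx c Ic; exists (maxn N N0) => n Nn.
  rewrite ysE; last exact: leq_trans (leq_maxl _ _) Nn.
  by apply: HN0; lia.
- have [N1 HN1] := cy c Ic; exists (N1 + N + k)%N => n Nn.
  have nE : n = (n - k + k)%N by lia.
  by rewrite nE -ysE; [apply: HN1|]; lia.
Qed.

End SolidVectorSpace.

Theorem theorem9p15 (R : realType) (Y : lmodType R) (S : solid_vector_space Y)
  (X : Type) (d : cone_metric S X) :
  (forall (xs : nat -> X) (x y : X), cm_conv d xs x -> cm_conv d xs y -> x = y) /\
  (forall (xs : nat -> X) (x : X) (phi : nat -> nat),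
      (forall m n, (m < n)%N -> (phi m < phi n)%N) ->
      cm_conv d xs x -> cm_conv d (fun n => xs (phi n)) x) /\
  (forall (xs : nat -> X) (x : X), cm_conv d xs x ->
      exists (a : X) (r : Y), vle S 0 r /\ forall n, vle S (dist d (xs n) a) r) /\
  (forall (xs ys : nat -> X) (N k : nat),
      (forall n, (N <= n)%N -> ys n = xs (n + k)%N) ->
      forall x : X, cm_conv d xs x <-> cm_conv d ys x).
Proof.
split; first exact: cm_conv_unique.
split; first exact: cm_conv_subseq.
split; last by move=> xs ys N k ysE x; exact: cm_conv_shift ysE.
move=> xs x cx; have [r bound] := cm_conv_bounded cx.
by exists x, r.
Qed.
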